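(* For any $\mathrm{LP}^{\mathrm{MLN}}$ program $\Pi$, the map \[ \phi(I)=I\cup\{\mathtt{sat}(i,w_i,\mathbf c) : w_i:\mathit{Head}_i(\mathbf c)\leftarrow\mathit{Body}_i(\mathbf c)\in Gr(\Pi),\ I\models \mathit{Body}_i(\mathbf c)\rightarrow \mathit{Head}_i(\mathbf c)\} \] is a one-to-one correspondence between $\mathrm{SM}[\Pi]$ and the set of stable models of $\mathsf{lpmln2asp^{rwd}}(\Pi)$. Furthermore, for every $I\in\mathrm{SM}[\Pi]$, \[ W_\Pi(I)=\exp\Big(\sum_{\mathtt{sat}(i,w_i,\mathbf c)\in\phi(I)} w_i\Big). \] Also, $\phi$ restricts to a one-to-one correspondence between the most probable stable models of $\Pi$ and the optimal stable models of $\mathsf{lpmln2asp^{rwd}}(\Pi)$.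
   Context: An $\mathrm{LP}^{\mathrm{MLN}}$ program is a finite set of weighted rules $w_i:\mathit{Head}_i(\mathbf x)\leftarrow \mathit{Body}_i(\mathbf x)$, indexed by $i$, where $\mathbf x$ is the list of global variables, $\mathit{Head}_i$ is a possibly empty disjunction of atoms, $\mathit{Body}_i$ a conjunction of literals, and $w_i$ is a real number or the symbol $\alpha$ (infinite weight). The Herbrand universe is finite; $Gr(\Pi)$ replaces global variables by all tuples $\mathbf c$ of the universe. For ground $\Pi$ and interpretation $I$: $\overline{\Pi}$ drops weights, $\Pi_I$ is the set of rules satisfied by $I$, $\mathrm{SM}[\Pi]=\{I: I \text{ stable model of }\overline{\Pi_I}\}$, $W_\Pi(I)=\exp(\sum_{w:R\in\Pi_I}w)$ if $I\in\mathrm{SM}[\Pi]$ and $0$ otherwise, $P_\Pi(I)=\lim_{\alpha\to\infty}W_\Pi(I)/\sum_{J\in\mathrm{SM}[\Pi]}W_\Pi(J)$; the most probable stable models are those $I$ maximizing $P_\Pi(I)$ (equivalently, lexicographically maximizing first the number of satisfied hard rules among $I\in\mathrm{SM}[\Pi]$, then the total weight of satisfied soft rules). Weak constraints: a weak constraint is $:\sim F\ [\mathit{Weight}@\mathit{Level}]$ with $F$ a conjunction of literals, $\mathit{Weight}$ real, $\mathit{Level}$ a nonnegative integer (optionally with a tuple of terms distinguishing instances). For $\Pi=\Pi_1\cup\Pi_2$ with $\Pi_1$ weak-constraint-free and $\Pi_2$ ground weak constraints, the stable models of $\Pi$ are those of $\Pi_1$; the penalty of a stable model $I$ at level $l$ is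 $\sum_{:\sim F[w@l]\in\Pi_2,\ I\models F} w$; $I$ is dominated by $I'$ if for some $l$ the penalty of $I'$ at level $l$ is smaller than that of $I$ and the penalties agree at all levels $k>l$; $I$ is optimal if it is not dominated by any stable model. $\mathsf{lpmln2asp^{rwd}}(\Pi)$ replaces each rule $w_i:\mathit{Head}_i(\mathbf x)\leftarrow\mathit{Body}_i(\mathbf x)$ by $\mathtt{sat}(i,w_i,\mathbf x)\leftarrow \mathit{Head}_i(\mathbf x)$; $\mathtt{sat}(i,w_i,\mathbf x)\leftarrow \mathtt{not}\ \mathit{Body}_i(\mathbf x)$; $\mathit{Head}_i(\mathbf x)\leftarrow \mathit{Body}_i(\mathbf x),\ \mathtt{not}\ \mathtt{not}\ \mathtt{sat}(i,w_i,\mathbf x)$; $:\sim \mathtt{sat}(i,w_i,\mathbf x).\ [-w'_i@l, i,\mathbf x]$, where $w'_i=1,\ l=1$ if $w_i=\alpha$, and $w'_i=w_i,\ l=0$ otherwise; $\mathtt{sat}$ is a fresh predicate. In the weight formula, hard weights are kept as the symbol $\alpha$. *)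

From Stdlib Require Import Reals.
From mathcomp Require Import all_boot.

Set Implicit Arguments.
Unset Strict Implicit.
Unset Printing Implicit Defensive.

Inductive form (X : Type) : Type :=
| FBot
| FAtom of X
| FAnd of form X & form X
| FOr of form X & form X
| FImp of form X & form X.
Arguments FBot {X}.

Definition FTop {X} : form X := FImp FBot FBot.
Definition FNot {X} (f : form X) : form X := FImp f FBot.

Fixpoint map_form (X Y : Type) (h : X -> Y) (f : form X) : form Y :=
  match f with
  | FBot => FBot
  | FAtom x => FAtom (h x)
  | FAnd f g => FAnd (map_form h f) (map_form h g)
  | FOr f g => FOr (map_form h f) (map_form h g)
  | FImp f g => FImp (map_form h f) (map_form h g)
  end.

Definition bigconj {X} (fs : seq (form X)) : form X := foldr (@FAnd X) FTop fs.
Definition bigdisj {X} (fs : seq (form X)) : form X := foldr (@FOr X) FBot fs.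

Section Semantics.
Variable X : finType.

Fixpoint fsat (I : {set X}) (f : form X) : bool :=
  match f with
  | FBot => false
  | FAtom x => x \in I
  | FAnd f g => fsat I f && fsat I g
  | FOr f g => fsat I f || fsat I g
  | FImp f g => fsat I f ==> fsat I g
  end.

(* Ferraris reduct F^I *)
Fixpoint reduct (I : {set X}) (f : form X) : form X :=
  if fsat I f then
    match f with
    | FBot => FBot
    | FAtom x => FAtom x
    | FAnd f g => FAnd (reduct I f) (reduct I g)
    | FOr f g => FOr (reduct I f) (reduct I g)
    | FImp f g => FImp (reduct I f) (reduct I g)
    end
  else FBot.

Definition psat (I : {set X}) (P : seq (form X)) : bool := all (fsat I) P.

Definition stable (P : seq (form X)) (I : {set X}) : bool :=
  psat I (map (reduct I) P) &&
  [forall J : {set X}, (J \proper I) ==> ~~ psat J (map (reduct I) P)].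

End Semantics.

Inductive weight : Type := Soft of R | Hard. (* Hard = alpha *)

Inductive lit (A : Type) : Type := Pos of A | Neg of A.

Definition lit_form (A : Type) (l : lit A) : form A :=
  match l with Pos a => FAtom a | Neg a => FNot (FAtom a) end.

(* A non-ground program: finitely many rules indexed by K; rule k has
   nv k global variables, weight wt k, and for each tuple c of elements
   of the Herbrand universe U its ground head Head_k(c) (a disjunction of
   ground atoms in A) and ground body Body_k(c) (a conjunction of literals). *)
Record lpmln (A U K : finType) := LPMLN {
  nv : K -> nat;
  wt : K -> weight;
  hd : forall k : K, (nv k).-tuple U -> seq A;
  bd : forall k : K, (nv k).-tuple U -> seq (lit A)
}.

Section LPMLN.
Variables A U K : finType.
Variable Pi : lpmln A U K.

Definition inst_ty (k : K) : finType := ((nv Pi k).-tuple U : finType).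

(* index set of Gr(Pi): pairs (i, c) *)
Definition ginst : finType := {k : K & inst_ty k}.

Definition gbody (g : ginst) : form A :=
  bigconj (map (@lit_form A) (bd (tagged g))).
Definition ghead (g : ginst) : form A :=
  bigdisj (map (@FAtom A) (hd (tagged g))).

Definition grule (g : ginst) : form A := FImp (gbody g) (ghead g).

(* SM[Pi]: I is a stable model of the unweighted (Pi_I)-bar *)
Definition SM (I : {set A}) : bool :=
  stable [seq grule g | g <- enum ginst & fsat I (grule g)] I.

Definition wval (alpha : R) (w : weight) : R :=
  match w with Soft r => r | Hard => alpha end.

(* W_Pi(I), as a function of the value alpha of the hard weight *)
Definition W (alpha : R) (I : {set A}) : R :=
  if SM I then
    exp (\big[Rplus/R0]_(g : ginst | fsat I (grule g)) wval alpha (wt Pi (tag g)))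
  else R0.

Definition lim_infty (f : R -> R) (l : R) : Prop :=
  forall eps : R, Rlt R0 eps ->
    exists M : R, forall a : R, Rlt M a -> Rlt (Rabs (Rminus (f a) l)) eps.

Definition isP (I : {set A}) (p : R) : Prop :=
  lim_infty (fun alpha => Rdiv (W alpha I) (\big[Rplus/R0]_(J : {set A} | SM J) W alpha J)) p.

Definition most_probable (I : {set A}) : Prop :=
  SM I /\ exists p, isP I p /\ forall (J : {set A}) (q : R), isP J q -> Rle q p.

End LPMLN.

(* a ground weak constraint  :~ F [w@l]  is (F, w, l); distinct list
   entries are distinct instances *)
Record asp (X : finType) := ASP {
  rules : seq (form X);
  weak : seq (form X * R * nat)
}.

Section ASP.
Variable X : finType.
Variable P : asp X.

Definition asp_stable (I : {set X}) : bool := stable (rules P) I.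

Definition penalty (I : {set X}) (l : nat) : R :=
  \big[Rplus/R0]_(c <- weak P | (c.2 == l) && fsat I c.1.1) c.1.2.

Definition dominated (I I' : {set X}) : Prop :=
  exists l : nat, Rlt (penalty I' l) (penalty I l) /\
    forall k : nat, (l < k)%N -> penalty I' k = penalty I k.

Definition optimal (I : {set X}) : Prop :=
  asp_stable I /\ ~ (exists I', asp_stable I' /\ dominated I I').

End ASP.

Section Translation.
Variables A U K : finType.
Variable Pi : lpmln A U K.

(* atoms of the translation: original atoms + fresh atoms sat(i,w_i,c) *)
Definition tatom : finType := (A + ginst Pi)%type.

Definition liftf (f : form A) : form tatom := map_form (@inl A (ginst Pi)) f.
Definition satA (g : ginst Pi) : form tatom := FAtom (inr g).

Definition trans_rules_of (g : ginst Pi) : seq (form tatom) :=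
  [:: FImp (liftf (ghead g)) (satA g);
      FImp (FNot (liftf (gbody g))) (satA g);
      FImp (FAnd (liftf (gbody g)) (FNot (FNot (satA g))))
           (liftf (ghead g)) ].

Definition trans_weak_of (g : ginst Pi) : form tatom * R * nat :=
  match wt Pi (tag g) with
  | Hard => (satA g, Ropp R1, 1%N)
  | Soft w => (satA g, Ropp w, 0%N)
  end.

Definition lpmln2asp : asp tatom :=
  ASP (flatten [seq trans_rules_of g | g <- enum (ginst Pi)])
      [seq trans_weak_of g | g <- enum (ginst Pi)].

Definition phi (I : {set A}) : {set tatom} :=
  ((@inl A (ginst Pi)) @: I) :|:
  ((@inr A (ginst Pi)) @: [set g | fsat I (grule g)]).

End Translation.

From Stdlib Require Import Reals Lra Classical.
From HB Require Import structures.
From mathcomp Require Import all_boot.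

Set Implicit Arguments.
Unset Strict Implicit.
Unset Printing Implicit Defensive.

(* The rules of lpmln2asp^rwd(Pi) for sat(i,w_i,c) make that atom true exactly
   when the ground rule is satisfied, and on the original atoms the reduct of the
   translation with respect to phi(I) behaves like the reduct of Pi_I with respect
   to I; hence phi is a bijection between SM[Pi] and the stable models of the
   translation.  The penalty of phi(I) is minus the number of satisfied hard rules
   at level 1 and minus the satisfied soft weight at level 0, so domination is the
   lexicographic order on these two scores.  Relative to a lexicographically
   maximal stable model M, W_alpha(J) / W_alpha(M) = exp(alpha (h_J - h_M) + s_J - s_M):
   thus P(M) is nondecreasing and bounded in alpha, hence converges to a positive
   limit, while a stable model with fewer hard rules has limit 0 and one with as
   many has limit exp(s_J - s_M) P(M). *)

Lemma all_enumT (T : finType) (p : pred T) : all p (enum T) = [forall x, p x].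
Proof. by apply/allP/forallP => [H x | H x _]; [apply: H; rewrite mem_enum | apply: H]. Qed.

Lemma all_flatten (T : Type) (p : pred T) (ss : seq (seq T)) :
  all p (flatten ss) = all (all p) ss.
Proof. by elim: ss => //= s ss IH; rewrite all_cat IH. Qed.

Section Reduct.
Variable X : finType.
Implicit Types (I J : {set X}) (f g : form X).

Lemma fsat_reduct I f : fsat I (reduct I f) = fsat I f.
Proof.
elim: f => [|x|f IHf g IHg|f IHf g IHg|f IHf g IHg] /=;
  try (case: ifP => //=); rewrite ?IHf ?IHg //.
Qed.

(* A reduct is [FBot] unless [I] satisfies the formula. *)
Lemma fsat_of_reduct I J f : fsat J (reduct I f) -> fsat I f.
Proof. by case: f => [|x|f g|f g|f g] /=; try case: ifP. Qed.

Lemma fsat_reduct_atom I J x : fsat J (reduct I (FAtom x)) = (x \in I) && (x \in J).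
Proof. by rewrite /=; case: (x \in I). Qed.

Lemma fsat_reduct_not I J f : fsat J (reduct I (FNot f)) = ~~ fsat I f.
Proof.
rewrite /= implybF; case: ifP => /=; last by case: (fsat I f).
by case If: (fsat I f) => //= _; apply/negP => /fsat_of_reduct; rewrite If.
Qed.

Lemma fsat_reduct_and I J f g :
  fsat J (reduct I (FAnd f g)) = fsat J (reduct I f) && fsat J (reduct I g).
Proof.
rewrite /=; case: ifP => //= /negbT; rewrite negb_and.
by case/orP=> /negP Hn; apply/esym/negP => /andP[/fsat_of_reduct ? /fsat_of_reduct ?].
Qed.

Lemma fsat_reduct_imp I J f g : fsat J (reduct I (FImp f g)) =
  fsat I (FImp f g) && (fsat J (reduct I f) ==> fsat J (reduct I g)).
Proof. by rewrite /=; case: ifP. Qed.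

Lemma fsat_map (Y : finType) (h : X -> Y) (J : {set Y}) f :
  fsat J (map_form h f) = fsat (h @^-1: J) f.
Proof. by elim: f => [|x|f IHf g IHg|f IHf g IHg|f IHf g IHg] //=; rewrite ?inE ?IHf ?IHg. Qed.

Lemma reduct_map (Y : finType) (h : X -> Y) (I : {set Y}) f :
  reduct I (map_form h f) = map_form h (reduct (h @^-1: I) f).
Proof.
elim: f => [|x|f IHf g IHg|f IHf g IHg|f IHf g IHg] /=;
  rewrite ?fsat_map ?inE; try (case: ifP => //=); rewrite ?IHf ?IHg //.
Qed.

Lemma psat_reduct (P : seq (form X)) I : psat I (map (reduct I) P) = psat I P.
Proof. by rewrite /psat all_map; apply: eq_all => f; apply: fsat_reduct. Qed.

End Reduct.

Lemma exists_maximal (T : finType) (le : T -> T -> Prop) (P : pred T) :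
  (forall x y, le x y \/ le y x) -> (forall x y z, le x y -> le y z -> le x z) ->
  (exists x, P x) -> exists m, P m /\ forall y, P y -> le y m.
Proof.
move=> total trans [x0 Px0].
have refl x : le x x by case: (total x x).
suff [m [Pm mmax]] : exists m, m \in enum P /\ forall y, y \in enum P -> le y m.
  by exists m; split => [|y Py]; [rewrite mem_enum in Pm | apply: mmax; rewrite mem_enum].
have : x0 \in enum P by rewrite mem_enum.
elim: (enum P) {Px0} x0 => // x [|y s] IH _ _.
  by exists x; split => [|z]; rewrite ?inE // => /eqP->.
case: (IH y (mem_head _ _)) => m [ms mmax]; case: (total x m) => [xm|mx].
  exists m; split => [|z]; first by rewrite inE ms orbT.
  by rewrite inE => /orP[/eqP->|]; [| exact: mmax].
exists x; split => [|z]; first by rewrite inE eqxx.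
by rewrite inE => /orP[/eqP->|/mmax zm]; [| exact: trans zm mx].
Qed.

Section LimitsAtInfinity.
Local Open Scope R_scope.

Lemma exp_le x y : x <= y -> exp x <= exp y.
Proof. by case/Rle_lt_or_eq_dec => [/exp_increasing/Rlt_le | ->] //; apply: Rle_refl. Qed.

Lemma lim_infty_ext f g a : (forall x, f x = g x) -> lim_infty f a -> lim_infty g a.
Proof. by move=> fg fa eps eps0; case: (fa _ eps0) => M HM; exists M => x /HM; rewrite fg. Qed.

Lemma lim_infty_const c : lim_infty (fun _ => c) c.
Proof. by move=> eps eps0; exists 0 => x _; rewrite Rminus_diag Rabs_R0. Qed.

Lemma lim_infty_le f g a b x0 : (forall x, x0 < x -> f x <= g x) ->
  lim_infty f a -> lim_infty g b -> a <= b.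
Proof.
move=> fg fa gb; apply: Rnot_lt_le => ba.
have eps0 : 0 < (a - b) / 2 by lra.
case: (fa _ eps0) => M1 HM1; case: (gb _ eps0) => M2 HM2.
set x := Rmax (Rmax M1 M2) x0 + 1.
have [x1 x2] : M1 < x /\ M2 < x.
  by move: (Rmax_l M1 M2) (Rmax_r M1 M2) (Rmax_l (Rmax M1 M2) x0); rewrite /x; lra.
have x3 : x0 < x by move: (Rmax_r (Rmax M1 M2) x0); rewrite /x; lra.
case: (Rabs_def2 _ _ (HM1 _ x1)) => _ ?; case: (Rabs_def2 _ _ (HM2 _ x2)) => ? _.
have := fg _ x3; lra.
Qed.

Lemma lim_infty_unique f a b : lim_infty f a -> lim_infty f b -> a = b.
Proof.
move=> fa fb; apply: Rle_antisym; apply: (@lim_infty_le f f _ _ 0) => // x _; exact: Rle_refl.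
Qed.

Lemma lim_infty_scal c f a : lim_infty f a -> lim_infty (fun x => c * f x) (c * a).
Proof.
move=> fa eps eps0.
have c1 : 0 < Rabs c + 1 by move: (Rabs_pos c); lra.
case: (fa (eps / (Rabs c + 1))); first exact: Rdiv_lt_0_compat.
move=> M HM; exists M => x /HM fx.
rewrite -Rmult_minus_distr_l Rabs_mult.
have -> : eps = (Rabs c + 1) * (eps / (Rabs c + 1)) by field; lra.
have := Rabs_pos c; have := Rabs_pos (f x - a); nra.
Qed.

Lemma lim_infty_exp_opp c : lim_infty (fun x => c * exp (- x)) 0.
Proof.
move=> eps eps0; exists (Rabs c / eps) => x xM.
have cx : Rabs c < eps * x.
  have -> : Rabs c = eps * (Rabs c / eps) by field; lra.
  exact: Rmult_lt_compat_l.
rewrite Rminus_0_r Rabs_mult (Rabs_right (exp (- x))); last exact/Rle_ge/Rlt_le/exp_pos.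
have ex : exp (- x) * exp x = 1 by rewrite -exp_plus Rplus_opp_l exp_0.
have e0 := exp_pos (- x).
have xe : x * exp (- x) < 1 by have := exp_ineq1_le x; nra.
have := Rabs_pos c; nra.
Qed.

Lemma lim_infty_sup f B : (forall x y, x <= y -> f x <= f y) -> (forall x, f x <= B) ->
  exists p, lim_infty f p /\ forall x, f x <= p.
Proof.
move=> mono bnd.
have bE : bound (fun y => exists x, y = f x) by exists B => y [x ->].
have nE : exists y, exists x, y = f x by exists (f 0), 0.
case: (completeness _ bE nE) => p [ub lub].
exists p; split=> [eps eps0|x]; last by apply: ub; exists x.
case: (classic (exists x, p - eps < f x)) => [[x0 fx0]|nex].
  exists x0 => x /Rlt_le/mono fx; have := ub (f x) (ex_intro _ x erefl).
  by move=> fp; apply: Rabs_def1; lra.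
suff : p <= p - eps by lra.
by apply: lub => y [x ->]; apply: Rnot_lt_le => fx; apply: nex; exists x.
Qed.

End LimitsAtInfinity.

Section Translation.
Variables (A U K : finType) (Pi : lpmln A U K).
Implicit Types (I J : {set A}) (g : ginst Pi).
Local Notation T := (tatom Pi).
Local Notation pre J' := (@inl A (ginst Pi) @^-1: J').
Local Notation sat_rules I :=
  [seq grule g | g <- enum (ginst Pi) & fsat I (grule g)].

Lemma all_sat_rules (p : pred (form A)) I :
  all p (sat_rules I) = [forall g : ginst Pi, fsat I (grule g) ==> p (grule g)].
Proof. by rewrite all_map all_filter all_enumT. Qed.

Lemma all_trans_rules (p : pred (form T)) :
  all p (rules (lpmln2asp Pi)) = [forall g : ginst Pi, all p (trans_rules_of g)].
Proof. by rewrite /= all_flatten all_map all_enumT. Qed.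

Lemma fsat_lift (J' : {set T}) f : fsat J' (liftf Pi f) = fsat (pre J') f.
Proof. exact: fsat_map. Qed.

Lemma fsat_reduct_lift (I' J' : {set T}) f :
  fsat J' (reduct I' (liftf Pi f)) = fsat (pre J') (reduct (pre I') f).
Proof. by rewrite /liftf reduct_map fsat_map. Qed.

Lemma fsat_trans_rules (I' J' : {set T}) g :
  all (fun f => fsat J' (reduct I' f)) (trans_rules_of g) =
  [&& fsat (pre I') (ghead g) ==> (inr g \in I'),
      fsat (pre J') (reduct (pre I') (ghead g)) ==> (inr g \in I') && (inr g \in J'),
      ~~ fsat (pre I') (gbody g) ==> (inr g \in I') && (inr g \in J'),
      fsat (pre I') (gbody g) && (inr g \in I') ==> fsat (pre I') (ghead g) &
      (inr g \in I') && fsat (pre J') (reduct (pre I') (gbody g)) ==>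
        fsat (pre J') (reduct (pre I') (ghead g))].
Proof.
rewrite /trans_rules_of; cbn [all]; rewrite andbT.
rewrite !(fsat_reduct_not, fsat_reduct_imp, fsat_reduct_and, fsat_reduct_atom).
rewrite !fsat_reduct_lift /= !fsat_lift !implybF negbK.
by case: (fsat _ (ghead g)) (fsat _ (reduct _ (ghead g))) (fsat _ (gbody g))
  (fsat _ (reduct _ (gbody g))) (inr g \in I') (inr g \in J') => [] [] [] [] [] [].
Qed.

Definition phi_of J (S : {set ginst Pi}) : {set T} := inl @: J :|: inr @: S.

Lemma phi_ofE I : phi Pi I = phi_of I [set g | fsat I (grule g)].
Proof. by []. Qed.

Lemma inl_phi_of J S x : (inl x \in phi_of J S) = (x \in J).
Proof.
by rewrite inE (mem_imset _ _ (@inl_inj _ _)) orbC; case: imsetP => // -[].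
Qed.

Lemma inr_phi_of J S g : (inr g \in phi_of J S) = (g \in S).
Proof.
by rewrite inE (mem_imset _ _ (@inr_inj _ _)); case: imsetP => // -[].
Qed.

Lemma pre_phi_of J S : pre (phi_of J S) = J.
Proof. by apply/setP => x; rewrite inE inl_phi_of. Qed.

Lemma pre_phi I : pre (phi Pi I) = I.
Proof. exact: pre_phi_of. Qed.

Lemma phi_inj : injective (phi Pi).
Proof. by move=> I J eIJ; rewrite -(pre_phi I) eIJ pre_phi. Qed.

Lemma inr_phi I g : (inr g \in phi Pi I) = fsat I (grule g).
Proof. by rewrite phi_ofE inr_phi_of inE. Qed.

Lemma psat_SM_reduct I J :
  psat J (map (reduct I) (sat_rules I)) =
  [forall g : ginst Pi, fsat I (grule g) ==> fsat J (reduct I (grule g))].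
Proof. by rewrite /psat all_map all_sat_rules. Qed.

Lemma psat_trans_reduct_phi I (J' : {set T}) :
  psat J' (map (reduct (phi Pi I)) (rules (lpmln2asp Pi))) =
  [forall g : ginst Pi, fsat I (grule g) ==>
     fsat (pre J') (reduct I (grule g)) &&
     (fsat (pre J') (reduct I (ghead g)) || ~~ fsat I (gbody g) ==> (inr g \in J'))].
Proof.
rewrite /psat all_map all_trans_rules; apply: eq_forallb => g.
rewrite fsat_trans_rules pre_phi inr_phi fsat_reduct_imp.
move: (@fsat_of_reduct _ I (pre J') (gbody g)) (@fsat_of_reduct _ I (pre J') (ghead g)).
rewrite /=; case: (fsat _ (reduct I (gbody g))) (fsat _ (reduct I (ghead g)))
  (fsat I (gbody g)) (fsat I (ghead g)) (inr g \in J') => [] [] [] [] [] //= hB hH;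
  by [have := hB isT | have := hH isT].
Qed.

Lemma phi_pre_of_model (I' : {set T}) :
  psat I' (rules (lpmln2asp Pi)) -> phi Pi (pre I') = I'.
Proof.
rewrite /psat all_trans_rules => /forallP rulesI'; apply/setP => -[x|g].
  by rewrite phi_ofE inl_phi_of inE.
rewrite inr_phi; move: (rulesI' g) => /=; rewrite !fsat_lift.
by case: (inr g \in I') (fsat _ (gbody g)) (fsat _ (ghead g)) => [] [] [].
Qed.

Lemma SM_stable_phi I : SM Pi I -> asp_stable (lpmln2asp Pi) (phi Pi I).
Proof.
rewrite /SM /asp_stable /stable psat_SM_reduct => /andP[_ /forallP minI].
apply/andP; split.
  rewrite psat_trans_reduct_phi; apply/forallP => g; apply/implyP => Ig.
  by rewrite pre_phi !fsat_reduct inr_phi Ig implybT.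
apply/forallP => J'; apply/implyP => ltJ'; apply/negP.
rewrite psat_trans_reduct_phi => /forallP J'red.
have preJ'_sub : pre J' \subset I.
  by rewrite -(pre_phi I); apply: preimsetS; apply: proper_sub.
have preJ' : pre J' = I.
  apply/eqP; rewrite eqEproper preJ'_sub /=; apply/negP => ltI.
  move: (minI (pre J')); rewrite ltI psat_SM_reduct => /negP; apply; apply/forallP => g.
  by apply/implyP => Ig; case/andP: (implyP (J'red g) Ig).
move/proper_subn: ltJ' => /negP; apply; apply/subsetP => -[x|g].
  by rewrite phi_ofE inl_phi_of -preJ' inE.
rewrite inr_phi => Ig; case/andP: (implyP (J'red g) Ig) => _ /implyP; apply.
by rewrite preJ' fsat_reduct orbC -implybE.
Qed.

Lemma phi_of_proper I J (S : {set ginst Pi}) :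
  J \proper I -> phi_of J S \proper phi_of I S.
Proof.
move=> ltJI; rewrite properE; apply/andP; split.
  apply/subsetP => -[x|g]; rewrite ?inl_phi_of ?inr_phi_of //.
  by apply: (subsetP (proper_sub ltJI)).
apply/subsetP => sub; move/proper_subn/subsetP: ltJI; apply => x xI.
by have := sub (inl x); rewrite !inl_phi_of; apply.
Qed.

Lemma stable_phi_SM (I' : {set T}) :
  asp_stable (lpmln2asp Pi) I' -> exists I, SM Pi I /\ phi Pi I = I'.
Proof.
rewrite /asp_stable /stable => /andP[redI' /forallP minI'].
have eqI' := phi_pre_of_model (etrans (esym (psat_reduct _ _)) redI').
exists (pre I'); split => //; set I := pre I' in eqI' *.
rewrite /SM /stable psat_SM_reduct; apply/andP; split.
  by apply/forallP => g; apply/implyP => Ig; rewrite fsat_reduct.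
apply/forallP => J; apply/implyP => ltJ; apply/negP; rewrite psat_SM_reduct => /forallP Jred.
move: (minI' (phi_of J [set g | fsat I (grule g)])).
rewrite -{1 2}eqI' phi_ofE phi_of_proper // implyTb -phi_ofE psat_trans_reduct_phi => /negP; apply.
apply/forallP => g; apply/implyP => Ig.
by rewrite pre_phi_of inr_phi_of inE Ig implybT andbT; apply: (implyP (Jred g)).
Qed.

End Translation.

Local Open Scope R_scope.

Lemma RplusA : associative Rplus. Proof. by move=> *; rewrite Rplus_assoc. Qed.
Lemma RmultA : associative Rmult. Proof. by move=> *; rewrite Rmult_assoc. Qed.
HB.instance Definition _ := Monoid.isComLaw.Build R R0 Rplus RplusA Rplus_comm Rplus_0_l.
HB.instance Definition _ := Monoid.isComLaw.Build R R1 Rmult RmultA Rmult_comm Rmult_1_l.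
HB.instance Definition _ := Monoid.isMulLaw.Build R R0 Rmult Rmult_0_l Rmult_0_r.
HB.instance Definition _ :=
  Monoid.isAddLaw.Build R Rmult Rplus Rmult_plus_distr_r Rmult_plus_distr_l.

Definition is_hard (w : weight) : bool := if w is Hard then true else false.
Definition hard_part (w : weight) : R := if w is Hard then 1 else 0.
Definition soft_part (w : weight) : R := if w is Soft r then r else 0.

Lemma wval_split alpha w : wval alpha w = alpha * hard_part w + soft_part w.
Proof. by case: w => [r|] /=; ring. Qed.

Section Scores.
Variables (A U K : finType) (Pi : lpmln A U K).
Implicit Types (I J : {set A}) (g : ginst Pi).

Definition hard_count I : nat :=
  (\sum_(g : ginst Pi | fsat I (grule g) && is_hard (wt Pi (tag g))) 1)%N.

Definition soft_total I : R :=
  \big[Rplus/R0]_(g : ginst Pi | fsat I (grule g)) soft_part (wt Pi (tag g)).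

Lemma INR_hard_count I : INR (hard_count I) =
  \big[Rplus/R0]_(g : ginst Pi | fsat I (grule g)) hard_part (wt Pi (tag g)).
Proof.
rewrite /hard_count (big_morph INR plus_INR (erefl (INR 0))) big_mkcondr.
by apply: eq_bigr => g _; case: (wt Pi (tag g)).
Qed.

Lemma W_SM alpha I : SM Pi I ->
  W Pi alpha I = exp (alpha * INR (hard_count I) + soft_total I).
Proof.
move=> SMI; rewrite /W SMI INR_hard_count big_distrr -big_split.
by congr exp; apply: eq_bigr => g _; rewrite wval_split.
Qed.

Lemma W_nonSM alpha I : ~~ SM Pi I -> W Pi alpha I = 0.
Proof. by rewrite /W => /negbTE ->. Qed.

Lemma W_phi alpha I : SM Pi I -> W Pi alpha I =
  exp (\big[Rplus/R0]_(g : ginst Pi | inr g \in phi Pi I) wval alpha (wt Pi (tag g))).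
Proof. by rewrite /W => ->; congr exp; apply: eq_bigl => g; rewrite inr_phi. Qed.

Local Notation penalty_phi I l := (penalty (lpmln2asp Pi) (phi Pi I) l).

Lemma penalty_phiE I l : penalty_phi I l =
  \big[Rplus/R0]_(g : ginst Pi | fsat I (grule g))
     (if (trans_weak_of g).2 == l then (trans_weak_of g).1.2 else 0).
Proof.
rewrite /penalty /= big_map big_enum_cond big_mkcond [RHS]big_mkcond.
apply: eq_bigr => g _.
have -> : (trans_weak_of g).1.1 = satA g by rewrite /trans_weak_of; case: (wt Pi (tag g)).
by rewrite /= inr_phi /grule /=; case: (_ == l); case: (_ ==> _).
Qed.

Lemma penalty_phi_hard I : penalty_phi I 1 = - INR (hard_count I).
Proof.
rewrite penalty_phiE INR_hard_count (big_morph Ropp Ropp_plus_distr Ropp_0).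
by apply: eq_bigr => g _; rewrite /trans_weak_of; case: (wt Pi _) => /= *; ring.
Qed.

Lemma penalty_phi_soft I : penalty_phi I 0 = - soft_total I.
Proof.
rewrite penalty_phiE /soft_total (big_morph Ropp Ropp_plus_distr Ropp_0).
by apply: eq_bigr => g _; rewrite /trans_weak_of; case: (wt Pi _) => /= *; ring.
Qed.

Lemma penalty_phi_high I k : (1 < k)%N -> penalty_phi I k = 0.
Proof.
move=> k_gt1; rewrite penalty_phiE big1 // => g _.
by rewrite /trans_weak_of; case: (wt Pi _) => /=; case: k k_gt1 => [|[]].
Qed.

Definition lexlt I J : Prop :=
  (hard_count I < hard_count J)%N \/
  (hard_count I = hard_count J /\ soft_total I < soft_total J).

Definition lexle I J : Prop :=
  (hard_count I < hard_count J)%N \/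
  (hard_count I = hard_count J /\ soft_total I <= soft_total J).

Lemma lexle_total I J : lexle I J \/ lexle J I.
Proof.
rewrite /lexle; case: (ltngtP (hard_count I) (hard_count J)) => [lt|gt|e].
- by left; left.
- by right; left.
- case: (Rle_dec (soft_total I) (soft_total J)) => ?; [left|right];
    by right; rewrite e; split => //; lra.
Qed.

Lemma lexle_trans I J M : lexle I J -> lexle J M -> lexle I M.
Proof.
move=> [lt|[e le]] [lt'|[e' le']].
- by left; apply: ltn_trans lt lt'.
- by left; rewrite -e'.
- by left; rewrite e.
- by right; split; [rewrite e e' | lra].
Qed.

Lemma lexlt_le_trans I J M : lexlt I J -> lexle J M -> lexlt I M.
Proof.
move=> [lt|[e lt]] [lt'|[e' le']].
- by left; apply: ltn_trans lt lt'.
- by left; rewrite -e'.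
- by left; rewrite e.
- by right; split; [rewrite e e' | lra].
Qed.

Lemma lexNle_lt I J : ~ lexle J I -> lexlt I J.
Proof.
rewrite /lexle /lexlt => nle.
case: (ltngtP (hard_count J) (hard_count I)) => [lt|gt|e].
- by case: nle; left.
- by left.
- by right; split => //; apply: Rnot_le_lt => le; apply: nle; right.
Qed.

Lemma dominated_phiE I J :
  dominated (lpmln2asp Pi) (phi Pi I) (phi Pi J) <-> lexlt I J.
Proof.
split=> [[[|[|l]] [lt eq]]|[lt|[e lt]]].
- move: lt (eq 1%N isT); rewrite !penalty_phi_soft !penalty_phi_hard => lt e.
  by right; split; [apply: INR_eq | ]; lra.
- by move: lt; rewrite !penalty_phi_hard => lt; left; apply/ltP/INR_lt; lra.
- by move: lt; rewrite !penalty_phi_high //; lra.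
- exists 1%N; rewrite !penalty_phi_hard; split=> [|k k_gt1]; last by rewrite !penalty_phi_high.
  by have := lt_INR _ _ (elimT ltP lt); lra.
- exists 0%N; rewrite !penalty_phi_soft; split=> [|[|[|k]] //= _]; first lra.
    by rewrite !penalty_phi_hard e.
  by rewrite !penalty_phi_high.
Qed.

End Scores.

Section Probability.
Variables (A U K : finType) (Pi : lpmln A U K).
Implicit Types (I J : {set A}).

Definition partition alpha : R := \big[Rplus/R0]_(J : {set A} | SM Pi J) W Pi alpha J.
Definition prob J alpha : R := W Pi alpha J / partition alpha.

Lemma lim_prob_nonSM J q : ~~ SM Pi J -> isP Pi J q -> q = 0.
Proof.
move=> nSMJ PJ; apply: (lim_infty_unique PJ); apply: lim_infty_ext (lim_infty_const 0) => x.
by rewrite W_nonSM // /Rdiv Rmult_0_l.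
Qed.

Variable M : {set A}.
Hypothesis SMM : SM Pi M.
Hypothesis Mmax : forall J, SM Pi J -> lexle Pi J M.

Definition rel_weight J alpha : R :=
  exp (alpha * (INR (hard_count Pi J) - INR (hard_count Pi M)) +
       (soft_total Pi J - soft_total Pi M)).

Lemma W_rel alpha J : SM Pi J -> W Pi alpha J = rel_weight J alpha * W Pi alpha M.
Proof. by move=> SMJ; rewrite !W_SM // /rel_weight -exp_plus; congr exp; ring. Qed.

Lemma rel_weight_nonincreasing J a b : SM Pi J -> a <= b -> rel_weight J b <= rel_weight J a.
Proof.
move=> SMJ ab; have hJM : INR (hard_count Pi J) <= INR (hard_count Pi M).
  case: (Mmax SMJ) => [lt|[-> _]]; last exact: Rle_refl.
  exact/Rlt_le/lt_INR/ltP.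
by apply: exp_le; nra.
Qed.

Lemma partition_rel alpha : partition alpha =
  (\big[Rplus/R0]_(J : {set A} | SM Pi J) rel_weight J alpha) * W Pi alpha M.
Proof. by rewrite /partition big_distrl; apply: eq_bigr => J; apply: W_rel. Qed.

Lemma sum_rel_weight_ge1 alpha :
  1 <= \big[Rplus/R0]_(J : {set A} | SM Pi J) rel_weight J alpha.
Proof.
rewrite (bigD1 M) //= {1}/rel_weight !Rminus_diag Rmult_0_r Rplus_0_r exp_0.
rewrite -{1}(Rplus_0_r 1); apply/Rplus_le_compat_l/(big_ind (fun x => 0 <= x)) => [|x y|J _];
  by [apply: Rle_refl | lra | apply/Rlt_le/exp_pos].
Qed.

Lemma prob_M_inv alpha :
  prob M alpha = / \big[Rplus/R0]_(J : {set A} | SM Pi J) rel_weight J alpha.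
Proof.
rewrite /prob partition_rel W_SM //.
move: (sum_rel_weight_ge1 alpha) (exp_pos (alpha * INR (hard_count Pi M) + soft_total Pi M)).
set S := \big[Rplus/R0]_(_ | _) _; set E := exp _ => ge1 E0.
by field; split; apply/Rgt_not_eq; lra.
Qed.

Lemma prob_M_nondecreasing a b : a <= b -> prob M a <= prob M b.
Proof.
move=> ab; rewrite !prob_M_inv; apply: Rinv_le_contravar.
  by have := sum_rel_weight_ge1 b; lra.
apply: (big_ind2 (fun x y => x <= y)) => [|x1 x2 y1 y2|J SMJ]; try lra.
exact: rel_weight_nonincreasing.
Qed.

Lemma prob_M_bounds alpha : 0 < prob M alpha <= 1.
Proof.
rewrite prob_M_inv; have := sum_rel_weight_ge1 alpha => ge1; split.
  by apply: Rinv_0_lt_compat; lra.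
by rewrite -Rinv_1; apply: Rinv_le_contravar; lra.
Qed.

Lemma lim_prob_M : exists pM, isP Pi M pM /\ 0 < pM.
Proof.
have [pM [PM ub]] := lim_infty_sup prob_M_nondecreasing (fun x => proj2 (prob_M_bounds x)).
by exists pM; split => //; have := ub 0; have := prob_M_bounds 0; lra.
Qed.

Lemma prob_rel alpha J : SM Pi J -> prob J alpha = rel_weight J alpha * prob M alpha.
Proof. by move=> SMJ; rewrite /prob W_rel // /Rdiv Rmult_assoc. Qed.

Lemma lim_prob_fewer_hard J q : SM Pi J -> (hard_count Pi J < hard_count Pi M)%N ->
  isP Pi J q -> q <= 0.
Proof.
move=> SMJ lt PJ; set c := soft_total Pi J - soft_total Pi M.
apply: (lim_infty_le (g := fun x => exp c * exp (- x)) (x0 := 0) _ PJ (lim_infty_exp_opp _)).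
move=> x x0; change (prob J x <= exp c * exp (- x)); rewrite prob_rel //.
have hJM : INR (hard_count Pi J) + 1 <= INR (hard_count Pi M).
  by rewrite -S_INR; apply/le_INR/leP.
have decay : rel_weight J x <= exp c * exp (- x).
  by rewrite -exp_plus; apply: exp_le; rewrite /c; nra.
have rw0 : 0 <= rel_weight J x by apply/Rlt_le/exp_pos.
by have := prob_M_bounds x; nra.
Qed.

Lemma lim_prob_same_hard J pM q : SM Pi J -> hard_count Pi J = hard_count Pi M ->
  isP Pi M pM -> isP Pi J q -> q = exp (soft_total Pi J - soft_total Pi M) * pM.
Proof.
move=> SMJ e PM PJ; apply: (lim_infty_unique PJ); apply: lim_infty_ext (lim_infty_scal _ PM).
move=> x; change (exp (soft_total Pi J - soft_total Pi M) * prob M x = prob J x).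
by rewrite (prob_rel x SMJ) /rel_weight e Rminus_diag Rmult_0_r Rplus_0_l.
Qed.

Lemma lim_prob_le_max J pM q : isP Pi M pM -> 0 < pM -> isP Pi J q ->
  q <= pM /\ (SM Pi J -> lexlt Pi J M -> q < pM).
Proof.
move=> PM pM0 PJ; case: (boolP (SM Pi J)) => [SMJ|nSMJ]; last first.
  by rewrite (lim_prob_nonSM nSMJ PJ); split=> [|/negP//]; lra.
case: (Mmax SMJ) => [lt|[e le]].
  by have := lim_prob_fewer_hard SMJ lt PJ; split=> *; lra.
rewrite (lim_prob_same_hard SMJ e PM PJ).
have [le1 lt1] : exp (soft_total Pi J - soft_total Pi M) <= 1 /\
  (soft_total Pi J < soft_total Pi M -> exp (soft_total Pi J - soft_total Pi M) < 1).
  by rewrite -exp_0; split=> [|?]; [apply: exp_le | apply: exp_increasing]; lra.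
split=> [|_ [lt|[_ lt]]]; first nra.
  by move: lt; rewrite e ltnn.
by have := lt1 lt; nra.
Qed.

End Probability.

Section Optimality.
Variables (A U K : finType) (Pi : lpmln A U K).

Lemma most_probable_optimal I :
  most_probable Pi I -> optimal (lpmln2asp Pi) (phi Pi I).
Proof.
case=> SMI [p [PI pmax]]; split; first exact: SM_stable_phi.
case=> J' [stJ' dom]; have [J [SMJ eJ]] := stable_phi_SM stJ'; rewrite -eJ in dom.
have [M [SMM Mmax]] := exists_maximal (@lexle_total _ _ _ Pi) (@lexle_trans _ _ _ Pi)
  (ex_intro (fun I => SM Pi I) I SMI).
have [pM [PM pM0]] := lim_prob_M SMM Mmax.
have IJ : lexlt Pi I J by apply/dominated_phiE.
have IM := lexlt_le_trans IJ (Mmax J SMJ).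
have := proj2 (lim_prob_le_max SMM Mmax PM pM0 PI) SMI IM; have := pmax M pM PM; lra.
Qed.

Lemma optimal_most_probable (I' : {set tatom Pi}) :
  optimal (lpmln2asp Pi) I' -> exists I, most_probable Pi I /\ phi Pi I = I'.
Proof.
case=> stI' nodom; have [I [SMI eI]] := stable_phi_SM stI'; exists I; split => //.
have Imax J : SM Pi J -> lexle Pi J I.
  move=> SMJ; apply: NNPP => /lexNle_lt /dominated_phiE domJ.
  by apply: nodom; exists (phi Pi J); rewrite -eI; split => //; apply: SM_stable_phi.
have [p [PI p0]] := lim_prob_M SMI Imax.
split => //; exists p; split => // J q PJ.
exact: proj1 (lim_prob_le_max SMI Imax PI p0 PJ).
Qed.

End Optimality.

Theorem theorem2 (A U K : finType) (Pi : lpmln A U K) :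
  (forall I : {set A}, SM Pi I -> asp_stable (lpmln2asp Pi) (phi Pi I)) /\
  (forall I J : {set A}, SM Pi I -> SM Pi J -> phi Pi I = phi Pi J -> I = J) /\
  (forall I' : {set tatom Pi}, asp_stable (lpmln2asp Pi) I' ->
     exists I : {set A}, SM Pi I /\ phi Pi I = I') /\
  (forall I : {set A}, SM Pi I -> forall alpha : R,
     W Pi alpha I =
     exp (\big[Rplus/R0]_(g : ginst Pi | inr g \in phi Pi I) wval alpha (wt Pi (tag g)))) /\
  (forall I : {set A}, most_probable Pi I -> optimal (lpmln2asp Pi) (phi Pi I)) /\
  (forall I' : {set tatom Pi}, optimal (lpmln2asp Pi) I' ->
     exists I : {set A}, most_probable Pi I /\ phi Pi I = I').
Proof.
split; first exact: SM_stable_phi.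
split; first by move=> I J _ _; apply: phi_inj.
split; first exact: stable_phi_SM.
split; first by move=> I SMI alpha; apply: W_phi.
by split; [apply: most_probable_optimal | apply: optimal_most_probable].
Qed.
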